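(* Let $a\in\mathbb{R}$ and $\lambda\in[0,1)$, and let $f_{a,\lambda}=h+\overline{g}$ be the generalized harmonic quasiconformal Koebe function, i.e. $h,g$ are analytic in the unit disk $\mathbb{D}$ with $h(0)=g(0)=0$ and $$h(z)-g(z)=k_a(z),\qquad \frac{g'(z)}{h'(z)}=\lambda z\quad(z\in\mathbb{D}).$$ Then $f_{a,\lambda}$ is univalent in $\mathbb{D}$ if and only if $-2\le a\le 2$.
   Context: $\mathbb{D}=\{z\in\mathbb{C}:|z|<1\}$. For $a\in\mathbb{R}\setminus\{0\}$ the generalized Koebe function is $k_a(z)=\frac{1}{2a}\left[\left(\frac{1+z}{1-z}\right)^a-1\right]$ (principal branch; $\frac{1+z}{1-z}$ lies in the right half-plane), and $k_0(z)=\frac12\log\frac{1+z}{1-z}$ (the limit $a\to0$). The system determines $h,g$ uniquely, and $h'(0)=1$, $g'(0)=0$. *)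

(* Stdlib reals + Coquelicot complex numbers C = R * R.
   For f : C -> C, [is_derive f z l] is complex (C-linear) differentiability,
   since the scalar ring is C_AbsRing. *)
From Stdlib Require Import Reals.
From Coquelicot Require Import Coquelicot.
Open Scope R_scope.

Definition in_disk (z : C) : Prop := Cmod z < 1.

(* Principal argument of w, valid for w in the right half-plane Re w > 0
   (the only case used: w = (1+z)/(1-z), z in the disk). *)
Definition arg_rhp (w : C) : R := atan (Im w / Re w).

Definition Clog_rhp (w : C) : C := (ln (Cmod w), arg_rhp w).

Definition Cpow_rhp (w : C) (a : R) : C :=
  (Rpower (Cmod w) a * cos (a * arg_rhp w),
   Rpower (Cmod w) a * sin (a * arg_rhp w)).

Definition koebe (a : R) (z : C) : C :=
  let w := ((1 + z) / (1 - z))%C in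
  if Req_EM_T a 0 then ((/ 2)%R * Clog_rhp w)%C
  else ((/ (2 * a))%R * (Cpow_rhp w a - 1))%C.

Definition univalent_on_disk (f : C -> C) : Prop :=
  forall z w, in_disk z -> in_disk w -> f z = f w -> z = w.

From Stdlib Require Import Reals Lra Classical.
From Coquelicot Require Import Coquelicot.
Open Scope R_scope.

(* With [f = h + conj g] one has [Re f = Re (h + g)] and [Im f = Im (h - g) = Im k_a]. In the
   coordinate [X + iY = log ((1 + z) / (1 - z))], [|Y| < PI/2], the function [k_a] is
   [(exp (a (X + iY)) - 1) / (2a)], so the level sets of [Im k_a] are the curves
   [exp (aX) sin (aY) = const]. When [|a| <= 2], [aY] stays in [(-PI, PI)], hence any two points
   of a level set are joined by a path along which [Re k_a = Re (h - g)] is strictly monotone.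
   Since the dilatation [g'/h' = lam z] has modulus [< 1], the derivative of [Re (h + g)] cannot
   vanish on such a path either, so [f] separates the two points. When [|a| > 2], [h] and [g]
   commute with conjugation (they are determined by [k_a] and [lam z], which do), and [k_a] is
   real at the non-real point [z0] with coordinate [i PI/a]; then [f (conj z0) = f z0]. *)

(** * Paths and complex derivatives on the disk *)

Lemma Cneq0_of_Re_pos (w : C) : 0 < Re w -> w <> 0%C.
Proof. intros Hw E. rewrite E in Hw. simpl in Hw. lra. Qed.

Lemma in_disk_one_minus_neq0 z : in_disk z -> (1 - z)%C <> 0%C.
Proof.
  intros Hz. apply Cneq0_of_Re_pos. generalize (Rle_abs (Re z)) (re_le_Cmod z).
  unfold in_disk, Re in *. simpl. lra.
Qed.

Lemma in_disk_conj z : in_disk z -> in_disk (Cconj z).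
Proof. unfold in_disk. rewrite Cmod_conj. auto. Qed.

Lemma in_disk_scale (lam : R) z : Rabs lam <= 1 -> in_disk z -> in_disk (RtoC lam * z).
Proof.
  unfold in_disk. intros Hl Hz. rewrite Cmod_mult, Cmod_R.
  generalize (Rabs_pos lam) (Cmod_ge_0 z). nra.
Qed.

Lemma locally_in_disk z : in_disk z -> @locally (AbsRing_UniformSpace C_AbsRing) z in_disk.
Proof.
  unfold in_disk. intros Hz. assert (Hr : 0 < 1 - Cmod z) by lra.
  exists (mkposreal _ Hr). intros y Hy. change (Cmod (y - z) < 1 - Cmod z) in Hy.
  replace y with (y - z + z)%C by ring.
  eapply Rle_lt_trans; [apply Cmod_triangle | simpl in Hy; lra].
Qed.

(* Derivatives of paths [R -> C], with [C] seen as a normed [R]-module. *)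
Notation is_path_derive := (@is_derive R_AbsRing C_R_NormedModule).

Lemma norm_C_R (u : C) : @norm R_AbsRing C_R_NormedModule u = Cmod u.
Proof.
  unfold norm; simpl; unfold prod_norm, Cmod; simpl; unfold norm, abs; simpl.
  rewrite !Rmult_1_r, <- !Rabs_mult, !Rabs_pos_eq; auto; nra.
Qed.

Lemma filterdiff_R_of_is_derive (f : C -> C) z l : is_derive f z l ->
  @filterdiff R_AbsRing C_R_NormedModule C_R_NormedModule
    f (locally (T := C_R_NormedModule) z) (fun u => (u * l)%C).
Proof.
  intros [_ Hf]. split.
  - apply Build_is_linear.
    + intros [] []; destruct l; apply injective_projections; simpl; unfold plus; simpl; ring.
    + intros k []; destruct l; apply injective_projections;
        simpl; unfold scal; simpl; unfold mult; simpl; ring.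
    + exists (Cmod l + 1). split; [generalize (Cmod_ge_0 l); lra|].
      intros u. rewrite !norm_C_R, Cmod_mult. generalize (Cmod_ge_0 l) (Cmod_ge_0 u); nra.
  - intros x Hx eps. apply is_filter_lim_locally_unique in Hx. subst x.
    destruct (Hf z (fun P HP => HP) eps) as [d Hd].
    (* neighbourhoods in [C_R_NormedModule] are squares; the one of half-side [d/2] lies in
       the disk of radius [d] *)
    exists (pos_div_2 d). intros y [Hy1 Hy2]. rewrite !norm_C_R. apply Hd.
    change (Cmod (y - z) < d).
    set (m := Rmax (Rabs (fst (y - z)%C)) (Rabs (snd (y - z)%C))).
    assert (Hm : m < d / 2) by (apply Rmax_lub_lt; [exact Hy1 | exact Hy2]).
    assert (Hm0 : 0 <= m) by (eapply Rle_trans; [apply Rabs_pos | apply Rmax_l]).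
    assert (Hs2 : sqrt 2 < 2) by (rewrite <- (sqrt_square 2) at 2 by lra; apply sqrt_lt_1_alt; lra).
    apply Rle_lt_trans with (sqrt 2 * m); [apply Cmod_2Rmax | nra].
Qed.

Lemma is_path_derive_pair (x y : R -> R) t x' y' :
  is_derive x t x' -> is_derive y t y' -> is_path_derive (fun s => (x s, y s)) t (x', y').
Proof.
  intros Hx Hy.
  apply (filterdiff_comp'_2 x y (fun a b => (a, b) : C_R_NormedModule) t _ _ (fun a b => (a, b))
    Hx Hy).
  apply filterdiff_linear, is_linear_prod; [apply is_linear_fst | apply is_linear_snd].
Qed.

Lemma is_path_derive_Re (p : R -> C) t v :
  is_path_derive p t v -> is_derive (fun s => Re (p s)) t (Re v).
Proof.
  intros Hp. apply (filterdiff_comp' p (fun u : C_R_NormedModule => fst u) t _ (fun u => fst u) Hp).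
  apply filterdiff_linear, is_linear_fst.
Qed.

Lemma is_path_derive_Im (p : R -> C) t v :
  is_path_derive p t v -> is_derive (fun s => Im (p s)) t (Im v).
Proof.
  intros Hp. apply (filterdiff_comp' p (fun u : C_R_NormedModule => snd u) t _ (fun u => snd u) Hp).
  apply filterdiff_linear, is_linear_snd.
Qed.

Lemma is_path_derive_comp (f : C -> C) (p : R -> C) t v l :
  is_derive f (p t) l -> is_path_derive p t v -> is_path_derive (fun s => f (p s)) t (v * l)%C.
Proof.
  intros Hf Hp.
  apply (filterdiff_ext_lin _ (fun s : R_AbsRing => (scal s v * l)%C)).
  - exact (filterdiff_comp' p f t _ _ Hp (filterdiff_R_of_is_derive f (p t) l Hf)).
  - intros s. destruct v, l. apply injective_projections;
      simpl; unfold scal; simpl; unfold mult; simpl; ring.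
Qed.

Lemma locally_unit_interval t : 0 < t < 1 -> locally t (fun s => 0 <= s <= 1).
Proof.
  intros Ht. assert (Hr : 0 < Rmin t (1 - t)) by (apply Rmin_pos; lra).
  exists (mkposreal _ Hr). intros s Hs. apply Rabs_lt_between' in Hs. simpl in Hs.
  generalize (Rmin_l t (1 - t)) (Rmin_r t (1 - t)). lra.
Qed.

Lemma is_derive_zero_disk_const (u : C -> C) :
  (forall z, in_disk z -> is_derive u z (RtoC 0)) -> forall z, in_disk z -> u z = u (RtoC 0).
Proof.
  intros Hu [x y] Hz.
  set (p := fun s : R => (s * x, s * y) : C).
  assert (Hp : forall s, 0 <= s <= 1 -> in_disk (p s)).
  { intros s Hs.
    replace (p s) with (RtoC s * (x, y))%C by (apply injective_projections; simpl; ring).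
    apply in_disk_scale; [rewrite Rabs_pos_eq; lra | exact Hz]. }
  replace (x, y) with (p 1) by (apply injective_projections; simpl; ring).
  replace (RtoC 0) with (p 0) by (apply injective_projections; simpl; ring).
  symmetry. apply (eq_is_derive (fun s => u (p s))); [| lra].
  intros s Hs.
  assert (Hpd : is_path_derive p s (x, y)) by (apply is_path_derive_pair; auto_derive; auto; ring).
  assert (H := is_path_derive_comp u p s (x, y) (RtoC 0) (Hu _ (Hp s Hs)) Hpd).
  rewrite Cmult_0_r in H. exact H.
Qed.

Lemma is_derive_Cminus (f g : C -> C) z df dg :
  is_derive f z df -> is_derive g z dg -> is_derive (fun y => f y - g y)%C z (df - dg)%C.
Proof. exact (is_derive_minus f g z df dg). Qed.

Lemma Cmod_conj_minus (y z : C) : Cmod (Cconj y - Cconj z) = Cmod (y - z).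
Proof. rewrite <- Cmod_conj. f_equal. destruct y, z. apply injective_projections; simpl; ring. Qed.

Lemma Cconj_RtoC (r : R) : Cconj (RtoC r) = RtoC r.
Proof. apply injective_projections; simpl; ring. Qed.

Definition reflect (f : C -> C) (z : C) : C := Cconj (f (Cconj z)).

Lemma reflect_at_0 (f : C -> C) : f (RtoC 0) = RtoC 0 -> reflect f (RtoC 0) = f (RtoC 0).
Proof. intros Hf0. unfold reflect. rewrite Cconj_RtoC, Hf0. apply Cconj_RtoC. Qed.

Lemma is_derive_reflect (f : C -> C) z l :
  is_derive f (Cconj z) l -> is_derive (reflect f) z (Cconj l).
Proof.
  intros [_ Hf]. split; [apply is_linear_scal_l |].
  intros x Hx eps.
  apply (@is_filter_lim_locally_unique _ (AbsRing_NormedModule C_AbsRing)) in Hx. subst x.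
  destruct (Hf (Cconj z) (fun P HP => HP) eps) as [d Hd].
  exists d. intros y Hy.
  assert (Hy' : Cmod (Cconj y - Cconj z) < d) by (rewrite Cmod_conj_minus; exact Hy).
  specialize (Hd (Cconj y) Hy').
  change (Cmod (Cconj (f (Cconj y)) - Cconj (f (Cconj z)) - (y - z) * Cconj l)
    <= eps * Cmod (y - z)).
  change (Cmod (f (Cconj y) - f (Cconj z) - (Cconj y - Cconj z) * l)
    <= eps * Cmod (Cconj y - Cconj z)) in Hd.
  rewrite Cmod_conj_minus in Hd. rewrite <- Cmod_conj.
  replace (Cconj (Cconj (f (Cconj y)) - Cconj (f (Cconj z)) - (y - z) * Cconj l))
    with (f (Cconj y) - f (Cconj z) - (Cconj y - Cconj z) * l)%C; [exact Hd|].
  generalize (f (Cconj y)) (f (Cconj z)). intros [] []. destruct y, z, l.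
  apply injective_projections; simpl; ring.
Qed.

Lemma reflect_fixed_of_deriv (f f' : C -> C) :
  (forall z, in_disk z -> is_derive f z (f' z)) ->
  (forall z, in_disk z -> reflect f' z = f' z) ->
  reflect f (RtoC 0) = f (RtoC 0) ->
  forall z, in_disk z -> reflect f z = f z.
Proof.
  intros Hf Hf' Hf0 z Hz.
  assert (Hu : forall y, in_disk y -> is_derive (fun y => f y - reflect f y)%C y (RtoC 0)).
  { intros y Hy. replace (RtoC 0) with (f' y - reflect f' y)%C
      by (rewrite Hf' by exact Hy; apply Cplus_opp_r).
    apply is_derive_Cminus; [auto |]. apply is_derive_reflect, Hf, in_disk_conj, Hy. }
  assert (E := is_derive_zero_disk_const _ Hu z Hz). cbv beta in E.
  rewrite Hf0 in E. replace (f (RtoC 0) - f (RtoC 0))%C with (RtoC 0) in E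
    by (symmetry; apply Cplus_opp_r).
  apply Ceq_minus in E. congruence.
Qed.

(** * The coordinate [log ((1 + z) / (1 - z))] on the disk *)

Definition polar_exp (X Y : R) : C := (exp X * cos Y, exp X * sin Y).

Definition cayley (z : C) : C := ((1 + z) / (1 - z))%C.

Definition disk_of_log (X Y : R) : C := ((polar_exp X Y - 1) / (polar_exp X Y + 1))%C.

(* [k_a] in the coordinate [log ((1+z)/(1-z)) = X + iY]. *)
Definition koebe_log (a X Y : R) : C :=
  if Req_EM_T a 0 then (X / 2, Y / 2)
  else ((exp (a * X) * cos (a * Y) - 1) / (2 * a), exp (a * X) * sin (a * Y) / (2 * a)).

Lemma Re_polar_exp_pos X Y : 0 < cos Y -> 0 < Re (polar_exp X Y).
Proof. intros Hc. simpl. apply Rmult_lt_0_compat; [apply exp_pos | exact Hc]. Qed.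

Lemma polar_exp_plus1_neq0 X Y : 0 < cos Y -> (polar_exp X Y + 1)%C <> 0%C.
Proof.
  intros Hc. apply Cneq0_of_Re_pos. simpl.
  generalize (Re_polar_exp_pos X Y Hc). simpl. lra.
Qed.

Lemma cayley_disk_of_log X Y : 0 < cos Y -> cayley (disk_of_log X Y) = polar_exp X Y.
Proof.
  intros Hc. assert (H1 := polar_exp_plus1_neq0 X Y Hc).
  unfold cayley, disk_of_log. field. split; [exact H1|].
  intro E. apply (f_equal Re) in E. simpl in E. lra.
Qed.

Lemma Cmod_polar_exp X Y : Cmod (polar_exp X Y) = exp X.
Proof.
  unfold polar_exp, Cmod; simpl.
  replace (exp X * cos Y * (exp X * cos Y * 1) + exp X * sin Y * (exp X * sin Y * 1))
    with (exp X * exp X * ((sin Y)² + (cos Y)²)) by (unfold Rsqr; ring).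
  rewrite sin2_cos2, Rmult_1_r. apply sqrt_square. left; apply exp_pos.
Qed.

Lemma arg_rhp_polar_exp X Y : - (PI / 2) < Y < PI / 2 -> arg_rhp (polar_exp X Y) = Y.
Proof.
  intros HY. assert (Hc : 0 < cos Y) by (apply cos_gt_0; lra).
  unfold arg_rhp, polar_exp; simpl.
  replace (exp X * sin Y / (exp X * cos Y)) with (tan Y).
  - apply atan_tan; lra.
  - unfold tan. field. split; [lra | apply Rgt_not_eq, exp_pos].
Qed.

Lemma koebe_disk_of_log a X Y :
  - (PI / 2) < Y < PI / 2 -> koebe a (disk_of_log X Y) = koebe_log a X Y.
Proof.
  intros HY. assert (Hc : 0 < cos Y) by (apply cos_gt_0; lra).
  unfold koebe. fold (cayley (disk_of_log X Y)).
  rewrite cayley_disk_of_log by exact Hc.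
  unfold koebe_log, Clog_rhp, Cpow_rhp, Rpower.
  rewrite Cmod_polar_exp, ln_exp, arg_rhp_polar_exp by exact HY.
  destruct (Req_EM_T a 0); apply injective_projections; simpl; field; auto.
Qed.

Lemma Cmod_minus1_lt_plus1 (w : C) : 0 < Re w -> Cmod (w - 1) < Cmod (w + 1).
Proof.
  intros Hw. destruct w as [p q]. simpl in Hw. unfold Cmod; simpl.
  apply sqrt_lt_1_alt. split; [| lra].
  apply Rplus_le_le_0_compat; rewrite Rmult_1_r; apply Rle_0_sqr.
Qed.

Lemma disk_of_log_in_disk X Y : 0 < cos Y -> in_disk (disk_of_log X Y).
Proof.
  intros Hc. unfold in_disk, disk_of_log.
  assert (Hw := Re_polar_exp_pos X Y Hc).
  rewrite Cmod_div by (apply polar_exp_plus1_neq0, Hc).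
  assert (Hp : 0 < Cmod (polar_exp X Y + 1)).
  { apply Cmod_gt_0, polar_exp_plus1_neq0, Hc. }
  apply Rmult_lt_reg_r with (Cmod (polar_exp X Y + 1)); [exact Hp|].
  unfold Rdiv. rewrite Rmult_assoc, Rinv_l, Rmult_1_r, Rmult_1_l by lra.
  apply Cmod_minus1_lt_plus1, Hw.
Qed.

Lemma polar_exp_log (w : C) : 0 < Re w -> polar_exp (ln (Cmod w)) (arg_rhp w) = w.
Proof.
  destruct w as [p q]. simpl. intros Hp.
  assert (Hm : 0 < Cmod (p, q)) by (apply Cmod_gt_0, Cneq0_of_Re_pos, Hp).
  unfold polar_exp, arg_rhp. rewrite exp_ln, cos_atan, sin_atan by exact Hm. simpl.
  assert (Hs : Cmod (p, q) = p * sqrt (1 + (q / p)²)).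
  { unfold Cmod; simpl.
    replace (p * (p * 1) + q * (q * 1)) with ((p * p) * (1 + (q / p)²))
      by (unfold Rsqr; field; lra).
    rewrite sqrt_mult_alt, sqrt_square by nra; reflexivity. }
  assert (Hq : 0 < sqrt (1 + (q / p)²)) by (apply sqrt_lt_R0; generalize (Rle_0_sqr (q / p)); lra).
  rewrite Hs. apply injective_projections; simpl; field; lra.
Qed.

Lemma Re_cayley_pos z : in_disk z -> 0 < Re (cayley z).
Proof.
  intros Hz. assert (H1z := in_disk_one_minus_neq0 z Hz).
  assert (Hz2 : Re z * Re z + Im z * Im z < 1).
  { unfold in_disk in Hz. assert (E := Cmod2_alt z). generalize (Cmod_ge_0 z). simpl in E. nra. }
  assert (Hw : ((1 - z) * cayley z = 1 + z)%C) by (unfold cayley; field; exact H1z).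
  destruct z as [p q], (cayley (p, q)) as [w1 w2]. simpl in *.
  apply (f_equal fst) in Hw as E1. apply (f_equal snd) in Hw as E2. simpl in E1, E2.
  assert (E : w1 * ((1 - p) * (1 - p) + q * q) = 1 - p * p - q * q).
  { transitivity ((1 - p) * ((1 + - p) * w1 - (0 + - q) * w2)
      - q * ((1 + - p) * w2 + (0 + - q) * w1)); [ring | rewrite E1, E2; ring]. }
  assert (0 < (1 - p) * (1 - p) + q * q) by nra. nra.
Qed.

Lemma disk_of_log_surj z :
  in_disk z -> exists X Y, - (PI / 2) < Y < PI / 2 /\ z = disk_of_log X Y.
Proof.
  intros Hz. assert (Hw := Re_cayley_pos z Hz). assert (H1z := in_disk_one_minus_neq0 z Hz).
  exists (ln (Cmod (cayley z))), (arg_rhp (cayley z)). split.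
  - unfold arg_rhp. generalize (atan_bound (Im (cayley z) / Re (cayley z))). lra.
  - unfold disk_of_log. rewrite polar_exp_log by exact Hw.
    assert (H1 : (cayley z + 1)%C <> 0%C).
    { apply Cneq0_of_Re_pos. revert Hw. generalize (cayley z). intros [] Hw. simpl in *. lra. }
    revert H1. unfold cayley. intros H1. field. split; [exact H1z|].
    intro E. apply (f_equal Re) in E. unfold Re in E. simpl in E. lra.
Qed.

Lemma disk_of_log_conj X Y : 0 < cos Y -> Cconj (disk_of_log X Y) = disk_of_log X (- Y).
Proof.
  intros Hc. unfold disk_of_log.
  rewrite Cdiv_conj by (apply polar_exp_plus1_neq0, Hc).
  replace (Cconj (polar_exp X Y - 1)) with (polar_exp X (- Y) - 1)%C.
  2:{ unfold polar_exp. rewrite cos_neg, sin_neg. apply injective_projections; simpl; ring. }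
  replace (Cconj (polar_exp X Y + 1)) with (polar_exp X (- Y) + 1)%C; [reflexivity|].
  unfold polar_exp. rewrite cos_neg, sin_neg. apply injective_projections; simpl; ring.
Qed.

Lemma koebe_log_conj a X Y : koebe_log a X (- Y) = Cconj (koebe_log a X Y).
Proof.
  unfold koebe_log, Cconj. destruct (Req_EM_T a 0); simpl.
  - apply injective_projections; simpl; field.
  - rewrite Ropp_mult_distr_r_reverse, cos_neg, sin_neg.
    apply injective_projections; simpl; field; auto.
Qed.

Lemma koebe_conj a z : in_disk z -> koebe a (Cconj z) = Cconj (koebe a z).
Proof.
  intros Hz. destruct (disk_of_log_surj z Hz) as [X [Y [HY ->]]].
  assert (Hc : 0 < cos Y) by (apply cos_gt_0; lra).
  rewrite disk_of_log_conj, !koebe_disk_of_log by (exact Hc || lra).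
  apply koebe_log_conj.
Qed.

Lemma disk_of_log_components X Y : 0 < cos Y ->
  disk_of_log X Y =
  let u := exp X * cos Y in let v := exp X * sin Y in
  ((u * u + v * v - 1) / ((u + 1) * (u + 1) + v * v), 2 * v / ((u + 1) * (u + 1) + v * v)).
Proof.
  intros Hc.
  assert (Hu : 0 < exp X * cos Y) by (apply Rmult_lt_0_compat; [apply exp_pos | exact Hc]).
  unfold disk_of_log, polar_exp. simpl.
  set (u := exp X * cos Y) in *. set (v := exp X * sin Y).
  apply injective_projections; simpl; field; nra.
Qed.

Lemma is_path_derive_disk_of_log (X Y : R -> R) t :
  ex_derive X t -> ex_derive Y t -> 0 < cos (Y t) ->
  exists v, is_path_derive (fun s => disk_of_log (X s) (Y s)) t v.
Proof.
  intros HX HY Hc.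
  assert (Hloc : locally t (fun s => 0 < cos (Y s))).
  { assert (Hcont : continuous (fun s => cos (Y s)) t).
    { apply continuous_comp; [exact (ex_derive_continuous (V := R_NormedModule) Y t HY) |].
      apply continuity_pt_filterlim, continuity_cos. }
    apply Hcont. exists (mkposreal _ Hc). intros r Hr.
    apply Rabs_lt_between' in Hr. simpl in Hr. lra. }
  assert (HD : (exp (X t) * cos (Y t) + 1) * (exp (X t) * cos (Y t) + 1)
      + exp (X t) * sin (Y t) * (exp (X t) * sin (Y t)) <> 0).
  { assert (0 < exp (X t) * cos (Y t)) by (apply Rmult_lt_0_compat; [apply exp_pos | exact Hc]).
    nra. }
  set (p := fun s => let u := exp (X s) * cos (Y s) in let v := exp (X s) * sin (Y s) in
    ((u * u + v * v - 1) / ((u + 1) * (u + 1) + v * v), 2 * v / ((u + 1) * (u + 1) + v * v))).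
  exists (Derive (fun s => fst (p s)) t, Derive (fun s => snd (p s)) t).
  apply (is_derive_ext_loc (fun s => (fst (p s), snd (p s)))).
  { apply (filter_imp _ _ (fun s Hs => eq_sym (disk_of_log_components (X s) (Y s) Hs)) Hloc). }
  apply is_path_derive_pair; apply Derive_correct; unfold p; simpl; auto_derive;
    repeat split; auto.
Qed.

(** * Level curves of [Im k_a] for [|a| <= 2] *)

Lemma mul_half_pi_bound a y : -2 <= a <= 2 -> - (PI / 2) < y < PI / 2 -> - PI < a * y < PI.
Proof.
  intros Ha Hy. assert (HPI := PI_RGT_0).
  destruct (Rle_or_lt 0 y); split; nra.
Qed.

Lemma mul_sin_pos_iff c x : - PI < x < PI -> (0 < c * sin x <-> 0 < c * x).
Proof.
  intros Hx. destruct (Rtotal_order x 0) as [Hn | [-> | Hp]].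
  - assert (sin x < 0) by (apply sin_lt_0_var; lra). split; intro; nra.
  - rewrite sin_0. lra.
  - assert (0 < sin x) by (apply sin_gt_0; lra). split; intro; nra.
Qed.

Lemma sin_eq0_small x : - PI < x < PI -> sin x = 0 -> x = 0.
Proof.
  intros Hx Hs. destruct (Req_dec x 0) as [| Hn]; [assumption |].
  assert (H := proj2 (mul_sin_pos_iff x x Hx)). rewrite Hs, Rmult_0_r in H.
  exfalso. apply (Rlt_irrefl 0), H. nra.
Qed.

Lemma mul_sin_pos_segment c x1 x2 :
  - PI < x1 < PI -> - PI < x2 < PI -> 0 < c * sin x1 -> 0 < c * sin x2 ->
  forall t, 0 <= t <= 1 -> 0 < c * sin (x1 + t * (x2 - x1)).
Proof.
  intros Hx1 Hx2 H1 H2 t Ht.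
  apply (mul_sin_pos_iff c x1 Hx1) in H1. apply (mul_sin_pos_iff c x2 Hx2) in H2.
  apply mul_sin_pos_iff; [destruct (Rle_or_lt x1 x2); split; nra |].
  replace (c * (x1 + t * (x2 - x1))) with ((1 - t) * (c * x1) + t * (c * x2)) by ring.
  destruct (Rle_lt_dec 1 t); nra.
Qed.

Definition koebe_level_path (a : R) (X Y : R -> R) : Prop :=
  (forall t, 0 <= t <= 1 -> ex_derive X t /\ ex_derive Y t /\ - (PI / 2) < Y t < PI / 2 /\
     Im (koebe_log a (X t) (Y t)) = Im (koebe_log a (X 0) (Y 0))) /\
  (forall t, 0 < t < 1 ->
     exists d, is_derive (fun s => Re (koebe_log a (X s) (Y s))) t d /\ d <> 0).

Lemma koebe_level_path_horizontal a X1 X2 Y :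
  X1 <> X2 -> - (PI / 2) < Y < PI / 2 -> a * Y = 0 ->
  koebe_level_path a (fun t => X1 + t * (X2 - X1)) (fun _ => Y).
Proof.
  intros HX HY HaY. unfold koebe_level_path, koebe_log.
  destruct (Req_EM_T a 0) as [Ha | Ha]; simpl; split.
  - intros t Ht. repeat split; try lra; auto_derive; auto.
  - intros t Ht. exists ((X2 - X1) / 2). split; [| lra].
    auto_derive; auto; field.
  - intros t Ht. rewrite HaY, sin_0. repeat split; try lra; auto_derive; auto.
  - intros t Ht. rewrite HaY, cos_0.
    exists ((X2 - X1) * exp (a * (X1 + t * (X2 - X1))) / 2). split.
    + auto_derive; auto. field. exact Ha.
    + assert (0 < exp (a * (X1 + t * (X2 - X1)))) by apply exp_pos.
      intro E. assert (Hz : (X2 - X1) * exp (a * (X1 + t * (X2 - X1))) = 0) by lra.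
      apply Rmult_integral in Hz. lra.
Qed.

Lemma koebe_log_level a c X Y :
  a <> 0 -> exp (a * X) * sin (a * Y) = c -> sin (a * Y) <> 0 ->
  koebe_log a X Y = ((c * cos (a * Y) / sin (a * Y) - 1) / (2 * a), c / (2 * a)).
Proof.
  intros Ha Hc Hs. unfold koebe_log. destruct (Req_EM_T a 0) as [| _]; [contradiction |].
  rewrite <- Hc. apply injective_projections; simpl; field; auto.
Qed.

(* The level curve [exp (a X) sin (a Y) = c], parametrized by [Y] running along a segment. *)
Lemma koebe_level_path_transversal a X1 Y1 X2 Y2 c :
  -2 <= a <= 2 -> a <> 0 -> Y1 <> Y2 ->
  - (PI / 2) < Y1 < PI / 2 -> - (PI / 2) < Y2 < PI / 2 ->
  exp (a * X1) * sin (a * Y1) = c -> exp (a * X2) * sin (a * Y2) = c -> c <> 0 ->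
  exists X Y, koebe_level_path a X Y /\ X 0 = X1 /\ Y 0 = Y1 /\ X 1 = X2 /\ Y 1 = Y2.
Proof.
  intros Ha Ha0 HY HY1 HY2 Hc1 Hc2 Hc0.
  assert (Hsin_end : forall X' Y', exp (a * X') * sin (a * Y') = c -> 0 < c * sin (a * Y')).
  { intros X' Y' Hc'. assert (sin (a * Y') <> 0) by (intro E; rewrite E, Rmult_0_r in Hc'; auto).
    rewrite <- Hc'. generalize (exp_pos (a * X')). nra. }
  set (Y := fun t => Y1 + t * (Y2 - Y1)).
  assert (HYt : forall t, 0 <= t <= 1 -> - (PI / 2) < Y t < PI / 2).
  { intros t Ht. unfold Y. split; nra. }
  assert (Hsign : forall t, 0 <= t <= 1 -> 0 < c * sin (a * Y t)).
  { intros t Ht. replace (a * Y t) with (a * Y1 + t * (a * Y2 - a * Y1)) by (unfold Y; ring).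
    apply mul_sin_pos_segment; try (apply mul_half_pi_bound; assumption).
    - exact (Hsin_end _ _ Hc1).
    - exact (Hsin_end _ _ Hc2).
    - exact Ht. }
  assert (Hsin : forall t, 0 <= t <= 1 -> sin (a * Y t) <> 0).
  { intros t Ht E. generalize (Hsign t Ht). rewrite E. lra. }
  assert (Hquot : forall t, 0 <= t <= 1 -> 0 < c / sin (a * Y t)).
  { intros t Ht. replace (c / sin (a * Y t)) with (c * sin (a * Y t) / (sin (a * Y t))²)
      by (unfold Rsqr; field; apply Hsin, Ht).
    apply Rdiv_lt_0_compat; [apply Hsign, Ht | apply Rlt_0_sqr, Hsin, Ht]. }
  set (X := fun t => ln (c / sin (a * Y t)) / a).
  assert (Hlevel : forall t, 0 <= t <= 1 -> exp (a * X t) * sin (a * Y t) = c).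
  { intros t Ht. unfold X. replace (a * (ln (c / sin (a * Y t)) / a)) with (ln (c / sin (a * Y t)))
      by (field; exact Ha0). rewrite exp_ln by (apply Hquot, Ht). field. apply Hsin, Ht. }
  assert (HXend : forall X' Y', exp (a * X') * sin (a * Y') = c -> ln (c / sin (a * Y')) / a = X').
  { intros X' Y' Hc'. assert (sin (a * Y') <> 0) by (intro E; rewrite E, Rmult_0_r in Hc'; auto).
    rewrite <- Hc'. replace (exp (a * X') * sin (a * Y') / sin (a * Y')) with (exp (a * X'))
      by (field; auto). rewrite ln_exp. field. exact Ha0. }
  exists X, Y. split; [split | repeat split].
  - intros t Ht. assert (Hs := Hsin t Ht). assert (Hq := Hquot t Ht). repeat split.
    + unfold X, Y in *. auto_derive. repeat split; auto.
    + unfold Y. auto_derive. exact I.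
    + apply HYt, Ht.
    + apply HYt, Ht.
    + assert (H0 : 0 <= 0 <= 1) by lra.
      rewrite (koebe_log_level a c (X t) (Y t)), (koebe_log_level a c (X 0) (Y 0));
        auto.
  - intros t Ht. assert (Ht' : 0 <= t <= 1) by lra. assert (Hs := Hsin t Ht').
    exists (- c * (Y2 - Y1) / (2 * (sin (a * Y t))²)). split.
    + apply (is_derive_ext_loc (fun s => (c * cos (a * Y s) / sin (a * Y s) - 1) / (2 * a))).
      { eapply filter_imp; [| exact (locally_unit_interval t Ht)]. intros s Hst. simpl.
        rewrite (koebe_log_level a c) by auto. reflexivity. }
      unfold Y in *. auto_derive; [exact Hs |].
      set (u := a * (Y1 + t * (Y2 - Y1))) in *.
      assert (Hsc : sin u * sin u + cos u * cos u = 1)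
        by (generalize (sin2_cos2 u); unfold Rsqr; auto).
      transitivity (- c * (Y2 - Y1) * (sin u * sin u + cos u * cos u) / (2 * (sin u)²)).
      * unfold Rsqr. field. split; assumption.
      * rewrite Hsc. unfold Rsqr. field. exact Hs.
    + assert (0 < (sin (a * Y t))²) by (apply Rlt_0_sqr, Hs).
      unfold Rdiv. apply Rmult_integral_contrapositive. split.
      * apply Rmult_integral_contrapositive. split; [apply Ropp_neq_0_compat, Hc0 | lra].
      * apply Rinv_neq_0_compat. lra.
  - unfold X, Y. rewrite Rmult_0_l, Rplus_0_r. apply HXend, Hc1.
  - unfold Y. ring.
  - unfold X, Y. replace (Y1 + 1 * (Y2 - Y1)) with Y2 by ring. apply HXend, Hc2.
  - unfold Y. ring.
Qed.

Lemma koebe_level_path_exists a X1 Y1 X2 Y2 :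
  -2 <= a <= 2 -> - (PI / 2) < Y1 < PI / 2 -> - (PI / 2) < Y2 < PI / 2 ->
  (X1, Y1) <> (X2, Y2) -> Im (koebe_log a X1 Y1) = Im (koebe_log a X2 Y2) ->
  exists X Y, koebe_level_path a X Y /\ X 0 = X1 /\ Y 0 = Y1 /\ X 1 = X2 /\ Y 1 = Y2.
Proof.
  intros Ha HY1 HY2 Hne HIm.
  assert (Hsin0 : forall y, - (PI / 2) < y < PI / 2 -> sin (a * y) = 0 -> a * y = 0).
  { intros y Hy. apply sin_eq0_small, mul_half_pi_bound; assumption. }
  unfold koebe_log in HIm. destruct (Req_EM_T a 0) as [Ha0 | Ha0]; simpl in HIm.
  - assert (HY : Y1 = Y2) by lra. subst Y2.
    exists (fun t => X1 + t * (X2 - X1)), (fun _ => Y1). split; [| repeat split; ring].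
    apply koebe_level_path_horizontal; [congruence | assumption | subst a; ring].
  - assert (Hc : exp (a * X1) * sin (a * Y1) = exp (a * X2) * sin (a * Y2)).
    { apply (Rmult_eq_reg_r (/ (2 * a))); [exact HIm |]. apply Rinv_neq_0_compat. lra. }
    destruct (Req_dec Y1 Y2) as [<- | HY].
    + assert (HX : X1 <> X2) by congruence.
      assert (HaY : a * Y1 = 0).
      { apply Hsin0; [exact HY1 |].
        assert (exp (a * X1) <> exp (a * X2)).
        { intro E. apply exp_inv, (Rmult_eq_reg_l a) in E; auto. }
        apply (Rmult_eq_reg_l (exp (a * X1) - exp (a * X2))); [lra | lra]. }
      exists (fun t => X1 + t * (X2 - X1)), (fun _ => Y1). split; [| repeat split; ring].
      apply koebe_level_path_horizontal; assumption.
    + apply (koebe_level_path_transversal a X1 Y1 X2 Y2 (exp (a * X1) * sin (a * Y1)));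
        auto.
      intro Hc0. apply HY.
      assert (a * Y1 = 0).
      { apply Hsin0; [exact HY1 |]. generalize (exp_pos (a * X1)). nra. }
      assert (a * Y2 = 0).
      { apply Hsin0; [exact HY2 |]. rewrite Hc in Hc0. generalize (exp_pos (a * X2)). nra. }
      apply (Rmult_eq_reg_l a); [lra | exact Ha0].
Qed.

(** * Univalence for [|a| <= 2] *)

Lemma Re_mul_sub_eq0 (A q : C) : Cmod q < 1 ->
  Im (A - q * A) = 0 -> Re (A + q * A) = 0 -> Re (A - q * A) = 0.
Proof.
  intros Hq. assert (Hq2 : Re q * Re q + Im q * Im q < 1).
  { assert (E := Cmod2_alt q). generalize (Cmod_ge_0 q). simpl in E. nra. }
  destruct A as [a1 a2], q as [q1 q2]. simpl in *. intros HIm HRe.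
  (* [Re (A (1 + q)) |1 - q|^2 = Re (A (1 - q)) (1 - |q|^2) - 2 Im q Im (A (1 - q))] *)
  assert (Hid : (a1 * (1 - q1) + a2 * q2) * (1 - q1 * q1 - q2 * q2) =
    (a1 * (1 + q1) - a2 * q2) * ((1 - q1) * (1 - q1) + q2 * q2)
    + 2 * q2 * (a2 * (1 - q1) - a1 * q2)) by ring.
  replace (a1 * (1 + q1) - a2 * q2) with 0 in Hid by lra.
  replace (a2 * (1 - q1) - a1 * q2) with 0 in Hid by lra.
  assert (H0 : (a1 * (1 - q1) + a2 * q2) * (1 - q1 * q1 - q2 * q2) = 0) by lra.
  apply Rmult_integral in H0. lra.
Qed.

Section HarmonicShear.
Variables (a : R) (h g h' g' w : C -> C).
Hypothesis h_deriv : forall z, in_disk z -> is_derive h z (h' z).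
Hypothesis g_deriv : forall z, in_disk z -> is_derive g z (g' z).
Hypothesis dilatation : forall z, in_disk z -> g' z = (w z * h' z)%C /\ Cmod (w z) < 1.
Hypothesis shear : forall z, in_disk z -> (h z - g z)%C = koebe a z.

Lemma is_derive_shear_parts (p : R -> C) t v :
  in_disk (p t) -> is_path_derive p t v ->
  let A := (v * h' (p t))%C in let q := w (p t) in
  is_derive (fun s => Re (h (p s) + g (p s))) t (Re (A + q * A)) /\
  is_derive (fun s => Re (h (p s) - g (p s))) t (Re (A - q * A)) /\
  is_derive (fun s => Im (h (p s) - g (p s))) t (Im (A - q * A)).
Proof.
  intros Hd Hv A q.
  assert (Hh := is_path_derive_comp h p t v (h' (p t)) (h_deriv _ Hd) Hv).
  assert (Hg := is_path_derive_comp g p t v (g' (p t)) (g_deriv _ Hd) Hv).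
  replace (v * g' (p t))%C with (q * A)%C in Hg
    by (unfold q, A; rewrite (proj1 (dilatation _ Hd)); ring).
  split; [| split].
  - apply (is_derive_plus (fun s => Re (h (p s))) (fun s => Re (g (p s))));
      apply is_path_derive_Re; assumption.
  - apply (is_derive_minus (fun s => Re (h (p s))) (fun s => Re (g (p s))));
      apply is_path_derive_Re; assumption.
  - apply (is_derive_minus (fun s => Im (h (p s))) (fun s => Im (g (p s))));
      apply is_path_derive_Im; assumption.
Qed.

(* By the mean value theorem the derivative of [Re (h + g)] vanishes somewhere on the path,
   which [Re_mul_sub_eq0] forbids. *)
Lemma Re_plus_neq_on_level_path (p : R -> C) :
  (forall t, 0 <= t <= 1 -> in_disk (p t) /\ exists v, is_path_derive p t v) ->
  (forall t, 0 <= t <= 1 -> Im (h (p t) - g (p t)) = Im (h (p 0) - g (p 0))) ->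
  (forall t, 0 < t < 1 ->
    exists d, is_derive (fun s => Re (h (p s) - g (p s))) t d /\ d <> 0) ->
  Re (h (p 0) + g (p 0)) <> Re (h (p 1) + g (p 1)).
Proof.
  intros Hp HIm HRe Heq.
  set (phi := fun s => Re (h (p s) + g (p s))).
  destruct (MVT_cor2 phi (Derive phi) 0 1) as [c [Ec Hc]]; [lra | |].
  { intros t Ht. destruct (Hp t Ht) as [Hd [v Hv]].
    apply is_derive_Reals, Derive_correct. eexists.
    apply (is_derive_shear_parts p t v Hd Hv). }
  assert (Hc' : 0 <= c <= 1) by lra.
  destruct (Hp c Hc') as [Hd [v Hv]].
  destruct (is_derive_shear_parts p c v Hd Hv) as [HdPhi [HdRe HdIm]].
  assert (HImc : Im (v * h' (p c) - w (p c) * (v * h' (p c))) = 0).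
  { rewrite <- (is_derive_unique _ _ _ HdIm).
    apply (is_derive_unique (fun s => Im (h (p s) - g (p s))) c).
    apply (is_derive_ext_loc (fun _ => Im (h (p 0) - g (p 0))));
      [| exact (is_derive_const (V := R_NormedModule) _ c)].
    apply (filter_imp _ _ (fun s Hs => eq_sym (HIm s Hs)) (locally_unit_interval c Hc)). }
  assert (HRec : Re (v * h' (p c) + w (p c) * (v * h' (p c))) = 0).
  { rewrite <- (is_derive_unique _ _ _ HdPhi). change (Derive phi c = 0).
    change (phi 0 = phi 1) in Heq. lra. }
  destruct (HRe c Hc) as [d [Hdd Hd0]]. apply Hd0.
  rewrite <- (is_derive_unique _ _ _ Hdd), (is_derive_unique _ _ _ HdRe).
  exact (Re_mul_sub_eq0 _ _ (proj2 (dilatation _ Hd)) HImc HRec).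
Qed.

Lemma univalent_of_small_koebe_exponent :
  -2 <= a <= 2 -> univalent_on_disk (fun z => (h z + Cconj (g z))%C).
Proof.
  intros Ha z1 z2 Hz1 Hz2 Hf.
  assert (HRe : Re (h z1 + g z1) = Re (h z2 + g z2)).
  { apply (f_equal Re) in Hf. simpl in *. exact Hf. }
  assert (HIm : Im (h z1 - g z1) = Im (h z2 - g z2)).
  { apply (f_equal Im) in Hf. simpl in *. lra. }
  rewrite !shear in HIm by assumption.
  destruct (disk_of_log_surj z1 Hz1) as [X1 [Y1 [HY1 ->]]].
  destruct (disk_of_log_surj z2 Hz2) as [X2 [Y2 [HY2 ->]]].
  rewrite !koebe_disk_of_log in HIm by assumption.
  destruct (classic ((X1, Y1) = (X2, Y2))) as [E | Hne]; [congruence | exfalso].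
  destruct (koebe_level_path_exists a X1 Y1 X2 Y2 Ha HY1 HY2 Hne HIm)
    as [X [Y [[Hpath Hmono] [HX0 [HY0 [HX1 HY1']]]]]].
  set (p := fun t => disk_of_log (X t) (Y t)).
  assert (Hcos : forall t, 0 <= t <= 1 -> 0 < cos (Y t)).
  { intros t Ht. apply cos_gt_0; apply Hpath, Ht. }
  assert (Hkp : forall t, 0 <= t <= 1 -> (h (p t) - g (p t))%C = koebe_log a (X t) (Y t)).
  { intros t Ht. rewrite shear by (apply disk_of_log_in_disk, Hcos, Ht).
    apply koebe_disk_of_log, Hpath, Ht. }
  apply (Re_plus_neq_on_level_path p).
  - intros t Ht. destruct (Hpath t Ht) as [HXd [HYd _]]. split.
    + apply disk_of_log_in_disk, Hcos, Ht.
    + apply is_path_derive_disk_of_log; auto.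
  - intros t Ht. rewrite !Hkp by (exact Ht || lra). apply Hpath, Ht.
  - intros t Ht. destruct (Hmono t Ht) as [d [Hd Hd0]]. exists d. split; [| exact Hd0].
    apply (is_derive_ext_loc (fun s => Re (koebe_log a (X s) (Y s)))); [| exact Hd].
    eapply filter_imp; [| exact (locally_unit_interval t Ht)].
    intros s Hs. cbv beta. rewrite Hkp by exact Hs. reflexivity.
  - unfold p. rewrite HX0, HY0, HX1, HY1'. exact HRe.
Qed.

End HarmonicShear.

(** * Real symmetry and non-univalence for [|a| > 2] *)

Section RealSymmetry.
Variables (a lam : R) (h g h' g' : C -> C).
Hypothesis lam_bound : Rabs lam <= 1.
Hypothesis h_deriv : forall z, in_disk z -> is_derive h z (h' z).
Hypothesis g_deriv : forall z, in_disk z -> is_derive g z (g' z).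
Hypothesis h_0 : h (RtoC 0) = RtoC 0.
Hypothesis g_0 : g (RtoC 0) = RtoC 0.
Hypothesis dilatation : forall z, in_disk z -> g' z = (RtoC lam * z * h' z)%C.
Hypothesis shear : forall z, in_disk z -> (h z - g z)%C = koebe a z.

Lemma reflect_h'_fixed z : in_disk z -> reflect h' z = h' z.
Proof.
  intros Hz. assert (Hzc := in_disk_conj z Hz).
  set (u := fun y => ((h y - g y) - (reflect h y - reflect g y))%C).
  assert (Hu : is_derive u z ((h' z - g' z) - (reflect h' z - reflect g' z))%C).
  { apply is_derive_Cminus; apply is_derive_Cminus; auto;
      apply is_derive_reflect; auto. }
  assert (Hu0 : is_derive u z (RtoC 0)).
  { apply (is_derive_ext_loc (fun _ => RtoC 0)); [| exact (is_derive_const _ z)].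
    eapply filter_imp; [| exact (locally_in_disk z Hz)]. intros y Hy. cbv beta. unfold u, reflect.
    rewrite <- Cminus_conj, !shear, koebe_conj, Cconj_conj by (auto using in_disk_conj).
    symmetry. apply Cplus_opp_r. }
  apply is_C_derive_unique in Hu. apply is_C_derive_unique in Hu0. rewrite Hu in Hu0.
  assert (Hg'r : reflect g' z = (RtoC lam * z * reflect h' z)%C).
  { unfold reflect. rewrite dilatation, !Cmult_conj, Cconj_conj, Cconj_RtoC by exact Hzc.
    reflexivity. }
  rewrite dilatation, Hg'r in Hu0 by exact Hz.
  assert (E : ((h' z - reflect h' z) * (1 - RtoC lam * z))%C = RtoC 0) by (rewrite <- Hu0; ring).
  assert (Hnz := in_disk_one_minus_neq0 _ (in_disk_scale lam z lam_bound Hz)).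
  destruct (Ceq_dec (h' z - reflect h' z) (RtoC 0)) as [E0 | Hn].
  - apply Ceq_minus in E0. congruence.
  - exfalso. exact (Cmult_neq_0 _ _ Hn Hnz E).
Qed.

Lemma reflect_h_fixed z : in_disk z -> reflect h z = h z.
Proof.
  exact (reflect_fixed_of_deriv h h' h_deriv reflect_h'_fixed (reflect_at_0 h h_0) z).
Qed.

Lemma reflect_g_fixed z : in_disk z -> reflect g z = g z.
Proof.
  apply (reflect_fixed_of_deriv g g' g_deriv).
  - intros y Hy. unfold reflect.
    rewrite dilatation, !Cmult_conj, Cconj_conj by (apply in_disk_conj, Hy).
    fold (reflect h' y). rewrite reflect_h'_fixed, dilatation, Cconj_RtoC by exact Hy.
    reflexivity.
  - exact (reflect_at_0 g g_0).
Qed.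

Lemma conj_collision_of_koebe_real z : in_disk z -> Im (koebe a z) = 0 ->
  (h (Cconj z) + Cconj (g (Cconj z)))%C = (h z + Cconj (g z))%C.
Proof.
  intros Hz HIm. rewrite <- shear in HIm by exact Hz.
  assert (Rh := reflect_h_fixed z Hz). assert (Rg := reflect_g_fixed z Hz).
  unfold reflect in Rh, Rg.
  assert (Rh' : h (Cconj z) = Cconj (h z)) by (rewrite <- Rh, Cconj_conj; reflexivity).
  rewrite Rh', Rg.
  revert HIm. generalize (h z) (g z). intros [] [] HIm. simpl in HIm.
  apply injective_projections; simpl; lra.
Qed.

Lemma koebe_exponent_bound_of_univalent :
  univalent_on_disk (fun z => (h z + Cconj (g z))%C) -> -2 <= a <= 2.
Proof.
  intros Hu. destruct (classic (-2 <= a <= 2)) as [| Hna]; [assumption | exfalso].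
  assert (HPI := PI_RGT_0).
  assert (Ha0 : a <> 0) by (intro; apply Hna; lra).
  (* [k_a] is real at the non-real point [z0 = disk_of_log 0 (PI / a)] *)
  set (th := PI / a).
  assert (Hta : th * a = PI) by (unfold th; field; exact Ha0).
  assert (Hth : - (PI / 2) < th < PI / 2).
  { destruct (Rle_or_lt 0 a); [assert (2 < a) by lra | assert (a < -2) by lra]; split; nra. }
  assert (Hs : sin th <> 0).
  { intro E. apply sin_eq0_small in E; [| lra]. rewrite E, Rmult_0_l in Hta. lra. }
  assert (Hc : 0 < cos th) by (apply cos_gt_0; lra).
  set (z0 := disk_of_log 0 th).
  assert (Hz0 : in_disk z0) by (apply disk_of_log_in_disk, Hc).
  assert (Hk0 : Im (koebe a z0) = 0).
  { unfold z0. rewrite koebe_disk_of_log by exact Hth.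
    unfold koebe_log. destruct (Req_EM_T a 0) as [| _]; [contradiction |]. simpl.
    rewrite (Rmult_comm a th), Hta, sin_PI. field. exact Ha0. }
  assert (Hconj := Hu _ _ (in_disk_conj z0 Hz0) Hz0 (conj_collision_of_koebe_real z0 Hz0 Hk0)).
  unfold z0 in Hconj. rewrite disk_of_log_conj in Hconj by exact Hc.
  apply (f_equal cayley) in Hconj.
  rewrite !cayley_disk_of_log in Hconj by (rewrite ?cos_neg; exact Hc).
  apply (f_equal Im) in Hconj. simpl in Hconj. rewrite sin_neg, exp_0 in Hconj. lra.
Qed.
End RealSymmetry.

Theorem theorem2p1 (a lam : R) (h g h' g' : C -> C) :
  0 <= lam < 1 ->
  (forall z, in_disk z -> is_derive h z (h' z)) ->
  (forall z, in_disk z -> is_derive g z (g' z)) ->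
  h 0%C = 0%C -> g 0%C = 0%C ->
  (forall z, in_disk z -> (h z - g z)%C = koebe a z) ->
  (forall z, in_disk z -> h' z <> 0%C /\ (g' z / h' z)%C = (RtoC lam * z)%C) ->
  (univalent_on_disk (fun z => (h z + Cconj (g z))%C) <-> -2 <= a <= 2).
Proof.
  intros Hlam Hh Hg Hh0 Hg0 Hk Hq.
  assert (Hlam1 : Rabs lam <= 1) by (rewrite Rabs_pos_eq; lra).
  assert (Hdil : forall z, in_disk z -> g' z = (RtoC lam * z * h' z)%C).
  { intros z Hz. destruct (Hq z Hz) as [Hnz E]. rewrite <- E. field. exact Hnz. }
  split.
  - apply (koebe_exponent_bound_of_univalent a lam h g h' g'); assumption.
  - apply (univalent_of_small_koebe_exponent a h g h' g' (fun z => RtoC lam * z)%C); auto.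
    intros z Hz. split; [apply Hdil, Hz | apply in_disk_scale; assumption].
Qed.
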